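(* Let $C_3$ be a positive constant. The following are equivalent: (i) For every positive integer $N$, every strictly increasing real sequence $(\lambda_k)_{k=-\infty}^\infty$, with $\delta_k:=\min\{\lambda_k-\lambda_{k-1},\lambda_{k+1}-\lambda_k\}$, and all nonnegative reals $t_1,\dots,t_N$, $$\sum_{m=1}^N\sum_{\substack{n=1\\ n\ne m}}^N\frac{\delta_m^{3/2}\delta_n^{1/2}t_mt_n}{(\lambda_m-\lambda_n)^2}\le C_3\sum_{n=1}^N t_n^2.$$ (ii) For every positive integer $M$, all real numbers $x_1,\dots,x_M$ distinct modulo $1$, and all nonnegative reals $\tau_1,\dots,\tau_M$, $$\frac13\sum_{m=1}^M d_m^2\tau_m^2+\sum_{m=1}^M\sum_{\substack{n=1\\ n\ne m}}^M\frac{d_m^{3/2}d_n^{1/2}\tau_m\tau_n}{\sin^2(\pi(x_m-x_n))}\le\frac{C_3}{\pi^2}\sum_{m=1}^M\tau_m^2,$$ where $d_m:=\min_{n\ne m}\|x_n-x_m\|$ (and $d_1:=1$ if $M=1$).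
   Context: $\|x\|=\min_{k\in\mathbb Z}|x-k|$ denotes the distance from the real number $x$ to a nearest integer. *)

From Stdlib Require Import Reals Lra Lia ZArith Arith.
Open Scope R_scope.

Fixpoint sum1 (n : nat) (f : nat -> R) : R :=
  match n with
  | O => 0
  | S k => sum1 k f + f (S k)
  end.

(* ||x|| = distance from x to a nearest integer = min_{k in Z} |x - k|.
   With frac_part x = x - floor x in [0,1), this minimum is
   min (frac x) (1 - frac x). *)
Definition nint_dist (x : R) : R := Rmin (frac_part x) (1 - frac_part x).

Definition delta (lam : Z -> R) (k : Z) : R :=
  Rmin (lam k - lam (k - 1)%Z) (lam (k + 1)%Z - lam k).

(* d_m = min_{1<=n<=M, n<>m} ||x_n - x_m||, and 1 if there is no such n.
   Computed as min(1, ...), which agrees since ||.|| <= 1/2. *)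
Fixpoint dmin_aux (x : nat -> R) (m : nat) (k : nat) : R :=
  match k with
  | O => 1
  | S j => if Nat.eqb (S j) m then dmin_aux x m j
           else Rmin (dmin_aux x m j) (nint_dist (x (S j) - x m))
  end.

Definition dmin (M : nat) (x : nat -> R) (m : nat) : R := dmin_aux x m M.

From Stdlib Require Import Reals ZArith Arith Lra Lia Psatz.
From HB Require Import structures.
From mathcomp Require ssreflect ssrbool ssrfun eqtype ssrnat seq path bigop zify.
Open Scope R_scope.

(* (ii) => (i): rescale lambda_1, ..., lambda_N by 1 / (4 (lambda_(N+1) - lambda_0)).  All the
   rescaled points then lie within 1/4 of each other, so ||x_n - x_m|| = |x_n - x_m|, the
   rescaled gaps bound d_m from below and sin^2 (pi u) <= pi^2 u^2; (i) follows term by term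
   from (ii), whose diagonal term is nonnegative.

   (i) => (ii): sort the fractional parts y_m of the x_m and extend them periodically,
   lambda_(a M + k) = y_(sigma k) + a; the gaps of lambda dominate the d_m.  Applying (i) to K
   periods with periodic weights, the left side is at least
   (K - J) sum_(m,n) w_mn sum_(|j| <= J) 1 / (y_m - y_n + j)^2, with
   w_mn = d_m^(3/2) d_n^(1/2) tau_m tau_n, and the right side is K C_3 sum_m tau_m^2.
   By the partial fraction expansion pi^2 / sin^2 (pi u) = sum_j 1 / (u + j)^2 (and sum_(j <> 0) 1 / j^2 = pi^2 / 3 on the
   diagonal), whose truncation error O(2^-q) at J = 2^(q+1) comes from iterating the
   duplication formula for 1 / sin^2, letting K and then q go to infinity gives (ii). *)

Fixpoint sum0 (n : nat) (f : nat -> R) : R :=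
  match n with O => 0 | S k => sum0 k f + f k end.

Lemma sum1_sum0 n f : sum1 n f = sum0 n (fun i => f (S i)).
Proof. induction n as [|n IH]; simpl; [reflexivity | now rewrite IH]. Qed.

Lemma sum0_ext n f g : (forall i, (i < n)%nat -> f i = g i) -> sum0 n f = sum0 n g.
Proof.
  induction n as [|n IH]; intros H; simpl; [reflexivity|].
  rewrite IH by (intros; apply H; lia). rewrite H by lia. reflexivity.
Qed.

Lemma sum0_le n f g : (forall i, (i < n)%nat -> f i <= g i) -> sum0 n f <= sum0 n g.
Proof.
  induction n as [|n IH]; intros H; simpl; [lra|].
  apply Rplus_le_compat; [apply IH; intros; apply H|apply H]; lia.
Qed.

Lemma sum0_nonneg n f : (forall i, (i < n)%nat -> 0 <= f i) -> 0 <= sum0 n f.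
Proof.
  induction n as [|n IH]; intros H; simpl; [lra|].
  apply Rplus_le_le_0_compat; [apply IH; intros; apply H|apply H]; lia.
Qed.

Lemma sum0_plus n f g : sum0 n (fun i => f i + g i) = sum0 n f + sum0 n g.
Proof. induction n; simpl; lra. Qed.

Lemma sum0_scal n c f : sum0 n (fun i => c * f i) = c * sum0 n f.
Proof. induction n as [|n IH]; simpl; [|rewrite IH]; ring. Qed.

Lemma sum0_const n c : sum0 n (fun _ => c) = INR n * c.
Proof. induction n as [|n IH]; simpl sum0; [simpl; ring|]. rewrite IH, S_INR; ring. Qed.

Lemma sum0_add a b f : sum0 (a + b) f = sum0 a f + sum0 b (fun i => f (a + i)%nat).
Proof.
  induction b as [|b IH]; simpl; [rewrite Nat.add_0_r; ring|].
  rewrite Nat.add_succ_r; simpl; rewrite IH; ring.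
Qed.

Lemma sum0_comm n m f :
  sum0 n (fun i => sum0 m (fun j => f i j)) = sum0 m (fun j => sum0 n (fun i => f i j)).
Proof.
  induction n as [|n IH]; simpl.
  - induction m as [|m IHm]; simpl; [ring | rewrite <- IHm; ring].
  - rewrite IH, <- sum0_plus. reflexivity.
Qed.

Lemma sum0_le_len a b f :
  (a <= b)%nat -> (forall i, (i < b)%nat -> 0 <= f i) -> sum0 a f <= sum0 b f.
Proof.
  intros Hab H. replace b with (a + (b - a))%nat by lia. rewrite sum0_add.
  assert (0 <= sum0 (b - a) (fun i => f (a + i)%nat)) by (apply sum0_nonneg; intros; apply H; lia).
  lra.
Qed.

Lemma sum0_succ_l n f : sum0 (S n) f = f O + sum0 n (fun i => f (S i)).
Proof. induction n as [|n IH]; simpl in *; [|rewrite IH]; ring. Qed.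

Lemma sum0_rev n f : sum0 n (fun i => f (n - 1 - i)%nat) = sum0 n f.
Proof.
  revert f; induction n as [|n IH]; intros f; simpl; [reflexivity|].
  rewrite (sum0_ext n _ (fun i => f (S (n - 1 - i)))) by (intros; f_equal; lia).
  rewrite (IH (fun j => f (S j))), Nat.sub_0_r, Nat.sub_diag.
  change (sum0 n f + f n) with (sum0 (S n) f). rewrite sum0_succ_l. ring.
Qed.

Lemma sum0_blocks K M g :
  sum0 (K * M) g = sum0 K (fun a => sum0 M (fun k => g (a * M + k)%nat)).
Proof. induction K as [|K IH]; simpl; [reflexivity|]. now rewrite Nat.add_comm, sum0_add, IH. Qed.

Lemma sum0_even_odd n f :
  sum0 (2 * n) f = sum0 n (fun j => f (2 * j)%nat) + sum0 n (fun j => f (S (2 * j))).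
Proof.
  induction n as [|n IH]; [simpl; ring|].
  replace (2 * S n)%nat with (S (S (2 * n))) by lia.
  cbn [sum0]. rewrite IH. ring.
Qed.

Lemma sum1_ext n f g : (forall i, (1 <= i <= n)%nat -> f i = g i) -> sum1 n f = sum1 n g.
Proof. intros H. rewrite !sum1_sum0. apply sum0_ext. intros; apply H; lia. Qed.

Lemma sum1_le n f g : (forall i, (1 <= i <= n)%nat -> f i <= g i) -> sum1 n f <= sum1 n g.
Proof. intros H. rewrite !sum1_sum0. apply sum0_le. intros; apply H; lia. Qed.

Lemma sum1_nonneg n f : (forall i, (1 <= i <= n)%nat -> 0 <= f i) -> 0 <= sum1 n f.
Proof. intros H. rewrite sum1_sum0. apply sum0_nonneg. intros; apply H; lia. Qed.

Lemma sum1_scal n c f : sum1 n (fun i => c * f i) = c * sum1 n f.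
Proof. rewrite !sum1_sum0. apply sum0_scal. Qed.

Lemma sum1_plus n f g : sum1 n (fun i => f i + g i) = sum1 n f + sum1 n g.
Proof. rewrite !sum1_sum0. apply sum0_plus. Qed.

Lemma sum1_diag n m c f : (1 <= m <= n)%nat ->
  sum1 n (fun i => if Nat.eqb i m then c else f i)
  = c + sum1 n (fun i => if Nat.eqb i m then 0 else f i).
Proof.
  induction n as [|n IH]; intros H; cbn [sum1]; [lia|].
  destruct (Nat.eq_dec m (S n)) as [->|Hm].
  - rewrite Nat.eqb_refl.
    rewrite !(sum1_ext n (fun i => if Nat.eqb i (S n) then _ else f i) f)
      by (intros i Hi; destruct (Nat.eqb_spec i (S n)); [lia|reflexivity]).
    ring.
  - rewrite IH by lia. destruct (Nat.eqb_spec (S n) m); [lia|]. ring.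
Qed.

Lemma sum1_double_blocks K M F :
  sum1 (K * M) (fun i => sum1 (K * M) (fun i' => F i i'))
  = sum0 M (fun k => sum0 M (fun l =>
      sum0 K (fun a => sum0 K (fun b => F (S (a * M + k)) (S (b * M + l)))))).
Proof.
  rewrite sum1_sum0, sum0_blocks.
  rewrite (sum0_ext K _ (fun a => sum0 M (fun k => sum0 M (fun l =>
             sum0 K (fun b => F (S (a * M + k)) (S (b * M + l))))))).
  - rewrite sum0_comm. apply sum0_ext. intros k _. apply sum0_comm.
  - intros a _. apply sum0_ext. intros k _. rewrite sum1_sum0, sum0_blocks. apply sum0_comm.
Qed.

Lemma sum1_lin n a c f g : sum1 n (fun i => a * (f i - c * g i)) = a * (sum1 n f - c * sum1 n g).
Proof. induction n as [|n IH]; simpl; [|rewrite IH]; ring. Qed.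

Lemma inv_sq_nonneg x : 0 <= 1 / x ^ 2.
Proof.
  destruct (Req_dec x 0) as [->|Hx].
  - rewrite pow_i, Rdiv_0_r by lia. lra.
  - apply Rlt_le, Rdiv_lt_0_compat; [lra|]. nra.
Qed.

Lemma div_sq_le_compat a b x : a <= b -> a / x ^ 2 <= b / x ^ 2.
Proof.
  intros H. pose proof (inv_sq_nonneg x) as Hx. unfold Rdiv in *. rewrite Rmult_1_l in Hx.
  apply Rmult_le_compat_r; assumption.
Qed.

(** * Partial fractions for [1 / sin^2] *)

Lemma not_int_of_small u : 0 < Rabs u < 1 -> ~ exists k : Z, u = IZR k.
Proof.
  intros Hu [k ->]. rewrite <- abs_IZR in Hu.
  destruct Hu as [H0 H1]. apply lt_IZR in H0, H1. lia.
Qed.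

Lemma sin_pi_neq0 u : 0 < Rabs u < 1 -> sin (PI * u) <> 0.
Proof.
  intros Hu Hs. apply sin_eq_0_0 in Hs as [k Hk]. apply (not_int_of_small u Hu). exists k.
  pose proof PI_RGT_0. apply (Rmult_eq_reg_l PI); lra.
Qed.

Lemma sin_sq_le y : sin y ^ 2 <= y ^ 2.
Proof.
  assert (Hpos : forall z, 0 < z -> sin z ^ 2 <= z ^ 2).
  { intros z Hz. pose proof (sin_lt_x z Hz). pose proof (SIN_bound z). pose proof PI2_1.
    destruct (Rle_dec z PI).
    - assert (0 <= sin z) by (apply sin_ge_0; lra). nra.
    - pose proof PI_RGT_0. nra. }
  destruct (Rtotal_order y 0) as [Hy|[->|Hy]].
  - replace y with (- - y) by ring. rewrite sin_neg. specialize (Hpos (- y) ltac:(lra)). nra.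
  - rewrite sin_0. lra.
  - auto.
Qed.

Lemma sin_sq_shift v k : sin (v + IZR k * PI) ^ 2 = sin v ^ 2.
Proof.
  assert (Hk : sin (IZR k * PI) = 0) by (apply sin_eq_0_1; now exists k).
  pose proof (sin2_cos2 (IZR k * PI)) as E. rewrite Hk in E. unfold Rsqr in E.
  rewrite sin_plus, Hk.
  replace ((sin v * cos (IZR k * PI) + cos v * 0) ^ 2)
    with (sin v ^ 2 * (cos (IZR k * PI) * cos (IZR k * PI))) by ring.
  replace (cos (IZR k * PI) * cos (IZR k * PI)) with 1 by lra. ring.
Qed.

Lemma sin_ge_cubic a : 0 <= a -> a <= 4 -> a - a ^ 3 / 6 <= sin a.
Proof.
  intros H0 H4. destruct (pre_sin_bound a 0 H0 H4) as [H _].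
  unfold sin_approx, sin_term in H. simpl in H. lra.
Qed.

Lemma inv_sin_sq_le_half t : 0 < t -> t <= PI / 2 -> 1 / sin t ^ 2 <= 1 / t ^ 2 + 3.
Proof.
  intros Ht HtPI. pose proof PI_4.
  set (q := 1 - t ^ 2 / 6).
  assert (Hq : 1 / 3 <= q <= 1) by (unfold q; nra).
  assert (Hsin : t * q <= sin t) by (unfold q; pose proof (sin_ge_cubic t ltac:(lra) ltac:(lra)); nra).
  assert (Hpoly : 1 <= q ^ 2 * (1 + 3 * t ^ 2)).
  { unfold q. set (s := t ^ 2). assert (0 <= s <= 4) by (unfold s; nra).
    assert (0 <= s * (8 / 3 - 35 * s / 36 + s ^ 2 / 12)) by (apply Rmult_le_pos; nra).
    nra. }
  assert (Hkey : t ^ 2 <= sin t ^ 2 * (1 + 3 * t ^ 2)).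
  { assert (t ^ 2 * 1 <= t ^ 2 * (q ^ 2 * (1 + 3 * t ^ 2))) by (apply Rmult_le_compat_l; nra).
    assert (0 < t * q) by nra.
    assert ((t * q) ^ 2 <= sin t ^ 2) by (apply pow_incr; lra). nra. }
  assert (Hs : 0 < sin t) by nra.
  assert (E : 1 / t ^ 2 + 3 - 1 / sin t ^ 2
              = (sin t ^ 2 * (1 + 3 * t ^ 2) - t ^ 2) / (sin t ^ 2 * t ^ 2)) by (field; lra).
  assert (0 <= (sin t ^ 2 * (1 + 3 * t ^ 2) - t ^ 2) / (sin t ^ 2 * t ^ 2))
    by (apply Rle_mult_inv_pos; [lra | apply Rmult_lt_0_compat; apply pow_lt; lra]).
  lra.
Qed.

Lemma inv_sin_sq_le th :
  0 < th -> th < PI -> 1 / sin th ^ 2 <= 1 / th ^ 2 + 1 / (PI - th) ^ 2 + 3.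
Proof.
  intros H0 HPI. pose proof (inv_sq_nonneg th). pose proof (inv_sq_nonneg (PI - th)).
  destruct (Rle_dec th (PI / 2)).
  - pose proof (inv_sin_sq_le_half th H0 r). lra.
  - rewrite <- sin_PI_x. pose proof (inv_sin_sq_le_half (PI - th) ltac:(lra) ltac:(lra)). lra.
Qed.

Lemma inv_sin_sq_double z :
  sin z <> 0 -> 4 / sin z ^ 2 = 1 / sin (z / 2) ^ 2 + 1 / sin ((z + PI) / 2) ^ 2.
Proof.
  intros H.
  replace ((z + PI) / 2) with (z / 2 + PI / 2) by field.
  rewrite sin_plus, sin_PI2, cos_PI2.
  replace z with (2 * (z / 2)) in H |- * by field. rewrite sin_2a in H |- *.
  replace (2 * (z / 2) / 2) with (z / 2) by field.
  assert (sin (z / 2) <> 0) by (intro E; apply H; rewrite E; ring).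
  assert (cos (z / 2) <> 0) by (intro E; apply H; rewrite E; ring).
  pose proof (sin2_cos2 (z / 2)) as E. unfold Rsqr in E.
  field_simplify; auto.
  replace (sin (z / 2) ^ 2 + cos (z / 2) ^ 2) with 1 by (rewrite <- E; ring).
  field; auto.
Qed.

Lemma sin_dyadic_shift_neq0 p x k : sin x <> 0 -> sin ((x + INR k * PI) / 2 ^ p) <> 0.
Proof.
  intros H Z. apply sin_eq_0_0 in Z as [m Hm]. apply H, sin_eq_0_1.
  exists (m * 2 ^ Z.of_nat p - Z.of_nat k)%Z.
  rewrite minus_IZR, mult_IZR, <- pow_IZR, <- INR_IZR_INZ.
  assert (0 < 2 ^ p) by (apply pow_lt; lra).
  apply (Rmult_eq_compat_r (2 ^ p)) in Hm. field_simplify in Hm; [simpl in Hm; lra | lra].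
Qed.

Lemma inv_sin_sq_dyadic p x : sin x <> 0 ->
  4 ^ p / sin x ^ 2 = sum0 (2 ^ p) (fun k => 1 / sin ((x + INR k * PI) / 2 ^ p) ^ 2).
Proof.
  intros Hx. induction p as [|p IH].
  - simpl. replace ((x + 0 * PI) / 1) with x by field. field. auto.
  - replace (4 ^ S p / sin x ^ 2) with (4 * (4 ^ p / sin x ^ 2)) by (simpl; field; auto).
    rewrite IH, <- sum0_scal.
    replace (2 ^ S p)%nat with (2 ^ p + 2 ^ p)%nat by (simpl; lia). rewrite sum0_add, <- sum0_plus.
    apply sum0_ext. intros k _.
    pose proof (sin_dyadic_shift_neq0 p x k Hx) as Hn.
    replace (4 * (1 / sin ((x + INR k * PI) / 2 ^ p) ^ 2))
      with (4 / sin ((x + INR k * PI) / 2 ^ p) ^ 2) by (field; auto).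
    rewrite inv_sin_sq_double by auto.
    assert (0 < 2 ^ p) by (apply pow_lt; lra).
    rewrite plus_INR, pow_INR. simpl INR. replace (1 + 1) with 2 by ring.
    f_equal; f_equal; f_equal; f_equal; simpl; field; lra.
Qed.

Lemma scaled_inv_sin_sq_le N u k : 0 < u -> 0 <= k -> u + k < N ->
  PI ^ 2 / N ^ 2 * (1 / sin ((PI * u + k * PI) / N) ^ 2)
  <= 1 / (u + k) ^ 2 + 1 / (u - (N - k)) ^ 2 + 3 * PI ^ 2 / N ^ 2.
Proof.
  intros Hu Hk HN. pose proof PI_RGT_0.
  assert (0 <= k * PI) by (apply Rmult_le_pos; lra).
  assert (0 < PI * u) by (apply Rmult_lt_0_compat; lra).
  set (th := (PI * u + k * PI) / N).
  assert (Hth : 0 < th < PI).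
  { unfold th; split; [apply Rdiv_lt_0_compat; nra|].
    apply (Rmult_lt_reg_r N); [lra|]. field_simplify; nra. }
  pose proof (inv_sin_sq_le th (proj1 Hth) (proj2 Hth)) as B.
  assert (0 < PI ^ 2 / N ^ 2) by (apply Rdiv_lt_0_compat; apply pow_lt; lra).
  apply (Rmult_le_compat_l (PI ^ 2 / N ^ 2)) in B; [|lra].
  replace (PI ^ 2 / N ^ 2 * (1 / th ^ 2 + 1 / (PI - th) ^ 2 + 3))
    with (1 / (u + k) ^ 2 + 1 / (u - (N - k)) ^ 2 + 3 * PI ^ 2 / N ^ 2) in B;
    [exact B|].
  unfold th. replace (PI - (PI * u + k * PI) / N) with (PI * (N - u - k) / N) by (field; lra).
  replace (u - (N - k)) with (- (N - u - k)) by ring.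
  field. repeat split; lra.
Qed.

Lemma pi_inv_sin_sq_le_partial p u : 0 < u < 1 ->
  PI ^ 2 / sin (PI * u) ^ 2
  <= sum0 (2 ^ p) (fun j => 1 / (u + INR j) ^ 2)
     + sum0 (2 ^ p) (fun j => 1 / (u - INR (S j)) ^ 2) + 3 * PI ^ 2 / 2 ^ p.
Proof.
  intros Hu. pose proof PI_RGT_0.
  assert (Hs : 0 < sin (PI * u)) by (apply sin_gt_0; nra).
  assert (HN : INR (2 ^ p) = 2 ^ p) by (rewrite pow_INR; reflexivity).
  assert (H2 : 0 < 2 ^ p) by (apply pow_lt; lra).
  assert (H4 : 4 ^ p = (2 ^ p) ^ 2) by (rewrite <- pow_mult, Nat.mul_comm, pow_mult; f_equal; ring).
  replace (PI ^ 2 / sin (PI * u) ^ 2) with (PI ^ 2 / (2 ^ p) ^ 2 * (4 ^ p / sin (PI * u) ^ 2))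
    by (rewrite H4; field; lra).
  rewrite inv_sin_sq_dyadic, <- sum0_scal by lra.
  eapply Rle_trans.
  { apply sum0_le. intros k Hk. apply (scaled_inv_sin_sq_le (2 ^ p) u (INR k)); [lra | apply pos_INR|].
    assert (INR (S k) <= 2 ^ p) by (rewrite <- HN; apply le_INR; lia). rewrite S_INR in *. lra. }
  rewrite !sum0_plus, sum0_const, HN.
  rewrite <- (sum0_rev _ (fun j => 1 / (u - INR (S j)) ^ 2)).
  rewrite (sum0_ext _ (fun j => 1 / (u - INR (S (2 ^ p - 1 - j))) ^ 2)
                      (fun i => 1 / (u - (2 ^ p - INR i)) ^ 2)).
  - right. field. lra.
  - intros k Hk. rewrite <- HN, <- minus_INR by lia. do 4 f_equal. lia.
Qed.

Lemma odd_inv_sq_sum_ge q :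
  PI ^ 2 / 8 - 3 * PI ^ 2 / (8 * 2 ^ q) <= sum0 (2 ^ q) (fun j => 1 / INR (S (2 * j)) ^ 2).
Proof.
  pose proof (pi_inv_sin_sq_le_partial q (1 / 2) ltac:(lra)) as B.
  replace (PI * (1 / 2)) with (PI / 2) in B by field. rewrite sin_PI2 in B.
  rewrite (sum0_ext _ (fun j => 1 / (1 / 2 + INR j) ^ 2) (fun j => 4 * (1 / INR (S (2 * j)) ^ 2))),
          (sum0_ext _ (fun j => 1 / (1 / 2 - INR (S j)) ^ 2) (fun j => 4 * (1 / INR (S (2 * j)) ^ 2)))
    in B by (intros j _; rewrite ?S_INR, mult_INR; simpl INR; pose proof (pos_INR j); field; lra).
  rewrite !sum0_scal in B. assert (0 < 2 ^ q) by (apply pow_lt; lra).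
  replace (3 * PI ^ 2 / (8 * 2 ^ q)) with (3 * PI ^ 2 / 2 ^ q / 8) by (field; lra). lra.
Qed.

Lemma inv_sq_sum_ge q :
  PI ^ 2 / 6 - 3 * PI ^ 2 / 2 / 2 ^ q <= sum0 (2 ^ q) (fun j => 1 / INR (S j) ^ 2).
Proof.
  induction q as [|q IH].
  - simpl. pose proof PI_4. pose proof PI_RGT_0. nra.
  - replace (2 ^ S q)%nat with (2 * 2 ^ q)%nat by (simpl; lia). rewrite sum0_even_odd.
    rewrite (sum0_ext _ (fun j => 1 / INR (S (S (2 * j))) ^ 2) (fun j => / 4 * (1 / INR (S j) ^ 2)))
      by (intros j _; rewrite !S_INR, mult_INR; simpl INR; pose proof (pos_INR j); field; lra).
    rewrite sum0_scal. pose proof (odd_inv_sq_sum_ge q). assert (0 < 2 ^ q) by (apply pow_lt; lra).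
    replace (3 * PI ^ 2 / 2 / 2 ^ S q) with (3 * PI ^ 2 / 2 ^ q / 4) by (simpl; field; lra).
    replace (3 * PI ^ 2 / (8 * 2 ^ q)) with (3 * PI ^ 2 / 2 ^ q / 8) in H by (field; lra).
    replace (3 * PI ^ 2 / 2 / 2 ^ q) with (3 * PI ^ 2 / 2 ^ q / 2) in IH by (field; lra). lra.
Qed.

Definition sym_sum (J : nat) (h : Z -> R) : R :=
  h 0%Z + sum0 J (fun j => h (Z.of_nat (S j))) + sum0 J (fun j => h (- Z.of_nat (S j))%Z).

(* [pi_csc2 v] is [sum_{j in Z} 1 / (v + j)^2], read with Rocq's convention [1 / 0 = 0]:
   at [v = 0] the [j = 0] term vanishes and the sum is [2 zeta(2) = PI^2 / 3]. *)
Definition pi_csc2 (v : R) : R :=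
  if Req_EM_T v 0 then PI ^ 2 / 3 else PI ^ 2 / sin (PI * v) ^ 2.

Lemma sym_sum_inv_sq J v :
  sym_sum J (fun j => 1 / (v + IZR j) ^ 2)
  = 1 / v ^ 2 + sum0 J (fun j => 1 / (v + INR (S j)) ^ 2) + sum0 J (fun j => 1 / (v - INR (S j)) ^ 2).
Proof.
  unfold sym_sum. replace (v + IZR 0) with v by (simpl; ring).
  f_equal; [f_equal|]; apply sum0_ext; intros j _.
  - now rewrite <- INR_IZR_INZ.
  - rewrite Ropp_Ropp_IZR, <- INR_IZR_INZ. reflexivity.
Qed.

Lemma inv_sq_sums_ge_pos q v : 0 < v < 1 ->
  PI ^ 2 / sin (PI * v) ^ 2 - 3 * PI ^ 2 / 2 ^ q
  <= 1 / v ^ 2 + sum0 (2 ^ S q) (fun j => 1 / (v + INR (S j)) ^ 2)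
     + sum0 (2 ^ S q) (fun j => 1 / (v - INR (S j)) ^ 2).
Proof.
  intros Hv. pose proof (pi_inv_sin_sq_le_partial q v Hv) as C.
  assert (Hn : (1 <= 2 ^ q)%nat) by (apply Nat.neq_0_lt_0, Nat.pow_nonzero; lia).
  replace (2 ^ q)%nat with (S (2 ^ q - 1)) in C at 1 by lia.
  rewrite sum0_succ_l in C. change (INR 0) with 0 in C. rewrite Rplus_0_r in C.
  assert (sum0 (2 ^ q - 1) (fun j => 1 / (v + INR (S j)) ^ 2)
          <= sum0 (2 ^ S q) (fun j => 1 / (v + INR (S j)) ^ 2))
    by (apply sum0_le_len; [simpl; lia | intros; apply inv_sq_nonneg]).
  assert (sum0 (2 ^ q) (fun j => 1 / (v - INR (S j)) ^ 2)
          <= sum0 (2 ^ S q) (fun j => 1 / (v - INR (S j)) ^ 2))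
    by (apply sum0_le_len; [simpl; lia | intros; apply inv_sq_nonneg]).
  lra.
Qed.

Lemma inv_sq_sums_ge_zero q :
  PI ^ 2 / 3 - 3 * PI ^ 2 / 2 ^ q
  <= 1 / 0 ^ 2 + sum0 (2 ^ S q) (fun j => 1 / (0 + INR (S j)) ^ 2)
     + sum0 (2 ^ S q) (fun j => 1 / (0 - INR (S j)) ^ 2).
Proof.
  pose proof PI_RGT_0. assert (0 < 2 ^ q) by (apply pow_lt; lra).
  rewrite pow_i, Rdiv_0_r by lia.
  rewrite (sum0_ext _ (fun j => 1 / (0 + INR (S j)) ^ 2) (fun j => 1 / INR (S j) ^ 2)),
          (sum0_ext _ (fun j => 1 / (0 - INR (S j)) ^ 2) (fun j => 1 / INR (S j) ^ 2))
    by (intros; f_equal; ring).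
  pose proof (inv_sq_sum_ge (S q)) as E.
  replace (3 * PI ^ 2 / 2 / 2 ^ S q) with (3 * PI ^ 2 / 2 ^ q / 4) in E by (simpl; field; lra).
  assert (0 <= 3 * PI ^ 2 / 2 ^ q) by (apply Rle_mult_inv_pos; [pose proof (pow2_ge_0 PI) | ]; lra).
  lra.
Qed.

Lemma pi_csc2_le_sym_sum q v : -1 < v < 1 ->
  pi_csc2 v - 3 * PI ^ 2 / 2 ^ q <= sym_sum (2 ^ S q) (fun j => 1 / (v + IZR j) ^ 2).
Proof.
  intros Hv. rewrite sym_sum_inv_sq. unfold pi_csc2.
  destruct (Req_EM_T v 0) as [->|Hv0]; [apply inv_sq_sums_ge_zero|].
  destruct (Rlt_le_dec 0 v) as [Hpos|Hneg]; [apply inv_sq_sums_ge_pos; lra|].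
  replace v with (- - v) by ring. rewrite Ropp_mult_distr_r_reverse, sin_neg.
  replace ((- sin (PI * - v)) ^ 2) with (sin (PI * - v) ^ 2) by ring.
  rewrite (sum0_ext _ (fun j => 1 / (- - v + INR (S j)) ^ 2) (fun j => 1 / (- v - INR (S j)) ^ 2)),
          (sum0_ext _ (fun j => 1 / (- - v - INR (S j)) ^ 2) (fun j => 1 / (- v + INR (S j)) ^ 2))
    by (intros; f_equal; ring).
  replace ((- - v) ^ 2) with ((- v) ^ 2) by ring.
  pose proof (inv_sq_sums_ge_pos q (- v) ltac:(lra)). lra.
Qed.

Lemma sum_toeplitz_ge (h : Z -> R) J K : (forall z, 0 <= h z) ->
  INR (K - J) * sym_sum J h <= sum0 K (fun a => sum0 K (fun b => h (Z.of_nat a - Z.of_nat b)%Z)).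
Proof.
  intros Hh. unfold sym_sum. induction K as [|K IH]; [simpl; lra|].
  assert (Hrow : sum0 K (fun b => h (Z.of_nat K - Z.of_nat b)%Z)
                 = sum0 K (fun j => h (Z.of_nat (S j)))).
  { rewrite <- sum0_rev. apply sum0_ext. intros; f_equal; lia. }
  assert (Hcol : sum0 K (fun a => h (Z.of_nat a - Z.of_nat K)%Z)
                 = sum0 K (fun j => h (- Z.of_nat (S j))%Z)).
  { rewrite <- sum0_rev. apply sum0_ext. intros; f_equal; lia. }
  assert (E : sum0 (S K) (fun a => sum0 (S K) (fun b => h (Z.of_nat a - Z.of_nat b)%Z))
              = sum0 K (fun a => sum0 K (fun b => h (Z.of_nat a - Z.of_nat b)%Z))
                + sum0 K (fun j => h (- Z.of_nat (S j))%Z) + sum0 K (fun j => h (Z.of_nat (S j)))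
                + h 0%Z).
  { cbn [sum0]. rewrite sum0_plus, Z.sub_diag, Hrow, Hcol. ring. }
  rewrite E.
  assert (0 <= sum0 K (fun j => h (Z.of_nat (S j)))) by (apply sum0_nonneg; auto).
  assert (0 <= sum0 K (fun j => h (- Z.of_nat (S j))%Z)) by (apply sum0_nonneg; auto).
  pose proof (Hh 0%Z).
  destruct (le_lt_dec J K) as [HJ|HJ].
  - replace (S K - J)%nat with (S (K - J)) by lia. rewrite S_INR.
    assert (sum0 J (fun j => h (Z.of_nat (S j))) <= sum0 K (fun j => h (Z.of_nat (S j))))
      by (apply sum0_le_len; auto).
    assert (sum0 J (fun j => h (- Z.of_nat (S j))%Z) <= sum0 K (fun j => h (- Z.of_nat (S j))%Z))
      by (apply sum0_le_len; auto).
    lra.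
  - replace (S K - J)%nat with O in * by lia. simpl INR in *.
    assert (0 <= sum0 K (fun a => sum0 K (fun b => h (Z.of_nat a - Z.of_nat b)%Z)))
      by (apply sum0_nonneg; intros; apply sum0_nonneg; auto).
    lra.
Qed.

Lemma sym_sum_scal J c h : sym_sum J (fun j => c * h j) = c * sym_sum J h.
Proof. unfold sym_sum. rewrite !sum0_scal. ring. Qed.

Lemma block_sum_ge K q v w : -1 < v < 1 -> 0 <= w ->
  INR (K - 2 ^ S q) * (w * (pi_csc2 v - 3 * PI ^ 2 / 2 ^ q))
  <= sum0 K (fun a => sum0 K (fun b => w / (v + IZR (Z.of_nat a - Z.of_nat b)) ^ 2)).
Proof.
  intros Hv Hw.
  rewrite (sum0_ext K _ (fun a => sum0 K (fun b => w * (1 / (v + IZR (Z.of_nat a - Z.of_nat b)) ^ 2))))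
    by (intros; apply sum0_ext; intros; unfold Rdiv; ring).
  eapply Rle_trans; [| apply (sum_toeplitz_ge (fun j => w * (1 / (v + IZR j) ^ 2)))].
  - rewrite sym_sum_scal. apply Rmult_le_compat_l; [apply pos_INR|].
    apply Rmult_le_compat_l; [exact Hw | apply pi_csc2_le_sym_sum; exact Hv].
  - intros z. apply Rmult_le_pos; [exact Hw | apply inv_sq_nonneg].
Qed.

Lemma nint_dist_shift u k : nint_dist (u + IZR k) = nint_dist u.
Proof.
  unfold nint_dist. replace (frac_part (u + IZR k)) with (frac_part u); [reflexivity|].
  apply (Int_part_frac_part_spec (u + IZR k) (Int_part u + k)%Z (frac_part u)).
  - pose proof (base_fp u). lra.
  - rewrite plus_IZR. pose proof (Rplus_Int_part_frac_part u). lra.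
Qed.

Lemma nint_dist_nonneg u : 0 <= nint_dist u.
Proof. unfold nint_dist. pose proof (base_fp u). apply Rmin_glb; lra. Qed.

Lemma nint_dist_le_abs u : nint_dist u <= Rabs u.
Proof.
  unfold nint_dist, frac_part. destruct (base_Int_part u) as [H1 H2].
  destruct (Rle_dec 0 u).
  - assert (-1 < Int_part u)%Z by (apply lt_IZR; lra).
    assert (0 <= IZR (Int_part u)) by (apply IZR_le; lia).
    rewrite Rabs_right by lra. eapply Rle_trans; [apply Rmin_l | lra].
  - assert (Int_part u < 0)%Z by (apply lt_IZR; lra).
    assert (IZR (Int_part u) <= -1) by (apply IZR_le; lia).
    rewrite Rabs_left by lra. eapply Rle_trans; [apply Rmin_r | lra].
Qed.

Lemma nint_dist_le_abs_shift u k : nint_dist u <= Rabs (u + IZR k).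
Proof. rewrite <- (nint_dist_shift u k). apply nint_dist_le_abs. Qed.

Lemma nint_dist_small u : Rabs u < 1 / 2 -> nint_dist u = Rabs u.
Proof.
  intros H. unfold nint_dist. destruct (Rle_dec 0 u).
  - rewrite Rabs_right in * by lra.
    replace (frac_part u) with u by (apply (Int_part_frac_part_spec u 0%Z u); simpl; lra).
    apply Rmin_left. lra.
  - rewrite Rabs_left in * by lra.
    replace (frac_part u) with (u + 1) by (apply (Int_part_frac_part_spec u (-1)%Z); simpl; lra).
    rewrite Rmin_right; lra.
Qed.

Lemma dmin_le_1 M x m : dmin M x m <= 1.
Proof.
  unfold dmin. induction M as [|M IH]; cbn [dmin_aux]; [lra|].
  destruct (Nat.eqb (S M) m); [auto|]. eapply Rle_trans; [apply Rmin_l | auto].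
Qed.

Lemma dmin_le_nint_dist M x m n :
  (1 <= n <= M)%nat -> n <> m -> dmin M x m <= nint_dist (x n - x m).
Proof.
  unfold dmin. induction M as [|M IH]; intros Hn Hnm; [lia|]. cbn [dmin_aux].
  destruct (Nat.eqb_spec (S M) m); [apply IH; lia|].
  destruct (Nat.eq_dec n (S M)) as [->|]; [apply Rmin_r|].
  eapply Rle_trans; [apply Rmin_l | apply IH; lia].
Qed.

Lemma dmin_ge M x m c : c <= 1 ->
  (forall n, (1 <= n <= M)%nat -> n <> m -> c <= nint_dist (x n - x m)) -> c <= dmin M x m.
Proof.
  unfold dmin. induction M as [|M IH]; intros Hc H; cbn [dmin_aux]; [auto|].
  destruct (Nat.eqb_spec (S M) m).
  - apply IH; auto. intros; apply H; lia.
  - apply Rmin_glb; [apply IH; auto; intros; apply H; lia | apply H; lia].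
Qed.

Lemma dmin_nonneg M x m : 0 <= dmin M x m.
Proof. apply dmin_ge; [lra | intros; apply nint_dist_nonneg]. Qed.

Lemma dmin_le_abs_shift M x m n k : (1 <= n <= M)%nat ->
  x n - x m + IZR k <> 0 -> dmin M x m <= Rabs (x n - x m + IZR k).
Proof.
  intros Hn Hne. destruct (Nat.eq_dec n m) as [->|Hnm].
  - replace (x m - x m + IZR k) with (IZR k) in * by ring.
    assert (k <> 0%Z) by (intros ->; auto).
    assert (1 <= Rabs (IZR k)) by (rewrite <- abs_IZR; apply IZR_le; lia).
    pose proof (dmin_le_1 M x m). lra.
  - eapply Rle_trans; [apply dmin_le_nint_dist; eauto | apply nint_dist_le_abs_shift].
Qed.

Definition pair_weight (d tau : nat -> R) (m n : nat) : R :=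
  d m * sqrt (d m) * sqrt (d n) * tau m * tau n.

Definition lhs_i (N : nat) (lam : Z -> R) (t : nat -> R) : R :=
  sum1 N (fun m => sum1 N (fun n =>
    if Nat.eqb n m then 0 else
      pair_weight (fun k => delta lam (Z.of_nat k)) t m n / (lam (Z.of_nat m) - lam (Z.of_nat n)) ^ 2)).

Definition lhs_ii_offdiag (M : nat) (x tau : nat -> R) : R :=
  sum1 M (fun m => sum1 M (fun n =>
    if Nat.eqb n m then 0 else
      pair_weight (dmin M x) tau m n / sin (PI * (x m - x n)) ^ 2)).

Definition cond_i (C3 : R) : Prop :=
  forall (N : nat) (lam : Z -> R) (t : nat -> R),
    (1 <= N)%nat ->
    (forall k : Z, lam k < lam (k + 1)%Z) ->
    (forall n : nat, (1 <= n <= N)%nat -> 0 <= t n) ->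
    lhs_i N lam t <= C3 * sum1 N (fun n => t n ^ 2).

Definition cond_ii (C3 : R) : Prop :=
  forall (M : nat) (x : nat -> R) (tau : nat -> R),
    (1 <= M)%nat ->
    (forall m n : nat, (1 <= m <= M)%nat -> (1 <= n <= M)%nat -> m <> n ->
       ~ (exists k : Z, x m - x n = IZR k)) ->
    (forall m : nat, (1 <= m <= M)%nat -> 0 <= tau m) ->
    1 / 3 * sum1 M (fun m => dmin M x m ^ 2 * tau m ^ 2) + lhs_ii_offdiag M x tau
    <= C3 / PI ^ 2 * sum1 M (fun m => tau m ^ 2).

Lemma pair_weight_nonneg d tau m n :
  0 <= d m -> 0 <= d n -> 0 <= tau m -> 0 <= tau n -> 0 <= pair_weight d tau m n.
Proof.
  intros. unfold pair_weight. pose proof (sqrt_pos (d m)). pose proof (sqrt_pos (d n)).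
  repeat apply Rmult_le_pos; auto.
Qed.

Lemma pair_weight_le d d' tau m n :
  0 <= d m <= d' m -> 0 <= d n <= d' n -> 0 <= tau m -> 0 <= tau n ->
  pair_weight d tau m n <= pair_weight d' tau m n.
Proof.
  intros Hm Hn Htm Htn. unfold pair_weight.
  assert (sqrt (d m) <= sqrt (d' m)) by (apply sqrt_le_1_alt; lra).
  assert (sqrt (d n) <= sqrt (d' n)) by (apply sqrt_le_1_alt; lra).
  pose proof (sqrt_pos (d m)). pose proof (sqrt_pos (d n)).
  repeat apply Rmult_le_compat_r; auto.
  apply Rmult_le_compat; [| | apply Rmult_le_compat |]; auto; try lra.
  apply Rmult_le_pos; lra.
Qed.

Lemma pair_weight_scale e d tau m n : 0 <= e ->
  pair_weight (fun k => e * d k) tau m n = e ^ 2 * pair_weight d tau m n.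
Proof.
  intros He. unfold pair_weight. rewrite !sqrt_mult_alt by exact He.
  replace (e ^ 2) with (e * (sqrt e * sqrt e)) by (rewrite sqrt_sqrt; [ring | exact He]).
  ring.
Qed.

Lemma pair_weight_diag d tau m : 0 <= d m -> pair_weight d tau m m = d m ^ 2 * tau m ^ 2.
Proof.
  intros H. unfold pair_weight.
  replace (d m * sqrt (d m) * sqrt (d m)) with (d m * (sqrt (d m) * sqrt (d m))) by ring.
  rewrite sqrt_sqrt by exact H. ring.
Qed.

(** * From (ii) to (i) *)

Lemma div_le_div_of_scaled A B W s k :
  0 <= A -> k * A <= B -> 0 < s -> s <= k * W -> 0 <= W -> A / W <= B / s.
Proof.
  intros HA HB Hs Hsk HW.
  assert (HW' : 0 < W) by (destruct HW as [|<-]; [assumption | lra]).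
  assert (Hk : 0 < k) by (destruct (Rlt_le_dec 0 k); [assumption | nra]).
  apply Rle_trans with (k * A / s).
  - replace (A / W) with (k * A / (k * W)) by (field; lra).
    apply Rmult_le_compat_l; [nra | apply Rinv_le_contravar; lra].
  - apply Rmult_le_compat_r; [apply Rlt_le, Rinv_0_lt_compat|]; lra.
Qed.

Section Increasing.

Variable lam : Z -> R.
Hypothesis lam_incr : forall k, lam k < lam (k + 1)%Z.

Lemma incr_lt a b : (a < b)%Z -> lam a < lam b.
Proof.
  intros Hab. replace b with (a + Z.of_nat (S (Z.to_nat (b - a - 1))))%Z by lia.
  induction (Z.to_nat (b - a - 1)) as [|n IH]; [apply lam_incr|].
  eapply Rlt_trans; [exact IH|].
  replace (a + Z.of_nat (S (S n)))%Z with (a + Z.of_nat (S n) + 1)%Z by lia. apply lam_incr.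
Qed.

Lemma incr_le a b : (a <= b)%Z -> lam a <= lam b.
Proof. intros Hab. destruct (Z.eq_dec a b) as [->|]; [lra | apply Rlt_le, incr_lt; lia]. Qed.

Lemma delta_pos k : 0 < delta lam k.
Proof.
  unfold delta. pose proof (lam_incr k). pose proof (lam_incr (k - 1)%Z).
  replace (k - 1 + 1)%Z with k in * by lia. apply Rmin_glb_lt; lra.
Qed.

Lemma delta_le_abs_sub m n : m <> n -> delta lam m <= Rabs (lam n - lam m).
Proof.
  intros Hmn. unfold delta. destruct (Z_lt_le_dec n m).
  - pose proof (incr_le n (m - 1) ltac:(lia)). pose proof (incr_lt n m l).
    rewrite Rabs_left by lra. eapply Rle_trans; [apply Rmin_l | lra].
  - pose proof (incr_le (m + 1) n ltac:(lia)). pose proof (incr_lt m n ltac:(lia)).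
    rewrite Rabs_right by lra. eapply Rle_trans; [apply Rmin_r | lra].
Qed.

End Increasing.

Section Rescaling.

Variables (N : nat) (lam : Z -> R).
Hypothesis lam_incr : forall k, lam k < lam (k + 1)%Z.

Let e : R := / (4 * (lam (Z.of_nat (S N)) - lam 0%Z)).
Let x (j : nat) : R := e * lam (Z.of_nat j).

Lemma rescale_pos : 0 < e.
Proof.
  pose proof (incr_lt lam lam_incr 0 (Z.of_nat (S N)) ltac:(lia)).
  apply Rinv_0_lt_compat. lra.
Qed.

Lemma rescale_le_quarter a b : (0 <= a <= Z.of_nat (S N))%Z -> (0 <= b <= Z.of_nat (S N))%Z ->
  e * Rabs (lam a - lam b) <= 1 / 4.
Proof.
  intros Ha Hb.
  pose proof (incr_le lam lam_incr 0 a ltac:(lia)).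
  pose proof (incr_le lam lam_incr a (Z.of_nat (S N)) ltac:(lia)).
  pose proof (incr_le lam lam_incr 0 b ltac:(lia)).
  pose proof (incr_le lam lam_incr b (Z.of_nat (S N)) ltac:(lia)).
  pose proof (incr_lt lam lam_incr 0 (Z.of_nat (S N)) ltac:(lia)).
  replace (1 / 4) with (e * (lam (Z.of_nat (S N)) - lam 0%Z)) by (unfold e; field; lra).
  apply Rmult_le_compat_l; [apply Rlt_le, rescale_pos | apply Rabs_le; lra].
Qed.

Lemma rescaled_sub m n : x m - x n = e * (lam (Z.of_nat m) - lam (Z.of_nat n)).
Proof. unfold x. ring. Qed.

Lemma rescaled_sub_abs_bounds m n : (1 <= m <= N)%nat -> (1 <= n <= N)%nat -> m <> n ->
  0 < Rabs (x m - x n) <= 1 / 4.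
Proof.
  intros Hm Hn Hmn. rewrite rescaled_sub, Rabs_mult, (Rabs_right e) by (left; apply rescale_pos).
  split; [|apply rescale_le_quarter; lia].
  apply Rmult_lt_0_compat; [apply rescale_pos|]. apply Rabs_pos_lt.
  destruct (Nat.lt_total m n) as [Hlt|[Heq|Hgt]]; [| lia |].
  - pose proof (incr_lt lam lam_incr (Z.of_nat m) (Z.of_nat n) ltac:(lia)). lra.
  - pose proof (incr_lt lam lam_incr (Z.of_nat n) (Z.of_nat m) ltac:(lia)). lra.
Qed.

Lemma rescaled_delta_le_dmin m : (1 <= m <= N)%nat -> e * delta lam (Z.of_nat m) <= dmin N x m.
Proof.
  intros Hm. pose proof rescale_pos as He. apply dmin_ge.
  - apply Rle_trans with (1 / 4); [|lra].
    eapply Rle_trans; [| apply (rescale_le_quarter (Z.of_nat m + 1) (Z.of_nat m)); lia].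
    apply Rmult_le_compat_l; [lra|]. unfold delta.
    eapply Rle_trans; [apply Rmin_r | apply Rle_abs].
  - intros n Hn Hnm.
    assert (Hs : Rabs (x n - x m) <= 1 / 4)
      by (rewrite rescaled_sub, Rabs_mult, (Rabs_right e) by lra; apply rescale_le_quarter; lia).
    rewrite nint_dist_small, rescaled_sub, Rabs_mult, (Rabs_right e) by lra.
    apply Rmult_le_compat_l; [lra|]. apply delta_le_abs_sub; [assumption | lia].
Qed.

Lemma lhs_i_le_rescaled t : (forall n, (1 <= n <= N)%nat -> 0 <= t n) ->
  lhs_i N lam t <= PI ^ 2 * lhs_ii_offdiag N x t.
Proof.
  intros Ht. unfold lhs_i, lhs_ii_offdiag.
  rewrite <- sum1_scal. apply sum1_le. intros m Hm.
  rewrite <- sum1_scal. apply sum1_le. intros n Hn.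
  destruct (Nat.eqb_spec n m) as [|Hnm]; [lra|].
  pose proof PI_RGT_0. pose proof rescale_pos as He.
  destruct (rescaled_sub_abs_bounds m n Hm Hn (not_eq_sym Hnm)) as [Hpos Hquarter].
  assert (Hsin : 0 < sin (PI * (x m - x n)) ^ 2).
  { rewrite <- Rsqr_pow2. apply Rsqr_pos_lt, sin_pi_neq0. lra. }
  rewrite Rmult_div_assoc.
  apply (div_le_div_of_scaled _ _ _ _ ((PI * e) ^ 2)); auto.
  - apply pair_weight_nonneg; auto; apply Rlt_le, delta_pos; auto.
  - replace ((PI * e) ^ 2 * pair_weight (fun k => delta lam (Z.of_nat k)) t m n)
      with (PI ^ 2 * pair_weight (fun k => e * delta lam (Z.of_nat k)) t m n)
      by (rewrite pair_weight_scale by lra; ring).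
    apply Rmult_le_compat_l; [nra|].
    pose proof (delta_pos lam lam_incr (Z.of_nat m)). pose proof (delta_pos lam lam_incr (Z.of_nat n)).
    apply pair_weight_le; auto; split; try nra; apply rescaled_delta_le_dmin; auto.
  - rewrite rescaled_sub. eapply Rle_trans; [apply sin_sq_le | right; ring].
  - apply pow2_ge_0.
Qed.

End Rescaling.

Lemma cond_ii_cond_i C3 : cond_ii C3 -> cond_i C3.
Proof.
  intros H N lam t HN Hlam Ht.
  pose proof (lhs_i_le_rescaled N lam Hlam t Ht) as Hi.
  set (x := fun j => / (4 * (lam (Z.of_nat (S N)) - lam 0%Z)) * lam (Z.of_nat j)) in Hi.
  assert (Hx : forall m n, (1 <= m <= N)%nat -> (1 <= n <= N)%nat -> m <> n ->
                 ~ (exists k : Z, x m - x n = IZR k)).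
  { intros m n Hm Hn Hmn. apply not_int_of_small. unfold x.
    pose proof (rescaled_sub_abs_bounds N lam Hlam m n Hm Hn Hmn). lra. }
  specialize (H N x t HN Hx Ht).
  assert (0 <= 1 / 3 * sum1 N (fun m => dmin N x m ^ 2 * t m ^ 2)).
  { apply Rmult_le_pos; [lra|]. apply sum1_nonneg. intros. apply Rmult_le_pos; apply pow2_ge_0. }
  pose proof PI_RGT_0.
  replace (C3 * sum1 N (fun n => t n ^ 2)) with (PI ^ 2 * (C3 / PI ^ 2 * sum1 N (fun n => t n ^ 2)))
    by (field; lra).
  eapply Rle_trans; [exact Hi|]. apply Rmult_le_compat_l; [apply pow2_ge_0 | lra].
Qed.

(** * From (i) to (ii) *)

Module Enumeration.
Import ssreflect ssrbool ssrfun eqtype ssrnat seq path bigop zify.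
Local Open Scope nat_scope.

HB.instance Definition _ :=
  Monoid.isComLaw.Build R 0%R Rplus (fun a b c => esym (Rplus_assoc a b c)) Rplus_comm Rplus_0_l.

Lemma sum1_big M F : sum1 M F = \big[Rplus/0%R]_(0 <= i < M) F i.+1.
Proof. elim: M => [|M IH]; first by rewrite big_geq. by rewrite big_nat_recr //= IH. Qed.

Lemma sum1_iota M F : sum1 M F = \big[Rplus/0%R]_(i <- iota 1 M) F i.
Proof.
  rewrite sum1_big.
  have -> : iota 1 M = index_iota 1 M.+1 by rewrite /index_iota subSS subn0.
  by rewrite big_add1.
Qed.

Lemma sorted_enumeration M (y : nat -> R) :
  (forall i j, le 1 i /\ le i M -> le 1 j /\ le j M -> i <> j -> y i <> y j) ->
  exists p : nat -> nat,
    (forall k, le 1 k /\ le k M -> le 1 (p k) /\ le (p k) M) /\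
    (forall k k', le 1 k -> lt k k' -> le k' M -> (y (p k) < y (p k'))%R) /\
    (forall F : nat -> R, sum1 M (fun k => F (p k)) = sum1 M F).
Proof.
  move=> y_inj.
  pose r i j := if Rle_dec (y i) (y j) then true else false.
  have r_total : total r by move=> i j; rewrite /r; case: Rle_dec; case: Rle_dec => //= *; lra.
  have r_trans : transitive r.
  { move=> j i k; rewrite /r; case: Rle_dec; case: Rle_dec => //=; case: Rle_dec => //= *; lra. }
  have r_refl : reflexive r by move=> i; rewrite /r; case: Rle_dec => //= *; lra.
  set s := sort r (iota 1 M).
  have s_perm : perm_eq s (iota 1 M) by rewrite perm_sort.
  have s_size : size s = M by rewrite size_sort size_iota.
  have s_range k : k < M -> 1 <= nth 0 s k <= M.
  { move=> Hk. have : nth 0 s k \in iota 1 M by rewrite -(perm_mem s_perm) mem_nth // s_size.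
    by rewrite mem_iota add1n ltnS. }
  exists (fun k => nth 0 s (k - 1)). split; [|split].
  - move=> k [H1 H2]. have /andP[/leP ? /leP ?] := s_range (k - 1) ltac:(apply/ltP; lia). lia.
  - move=> k k' H1 H2 H3.
    have Hle : r (nth 0 s (k - 1)) (nth 0 s (k' - 1)).
    { apply: (sorted_leq_nth r_trans r_refl 0 (sort_sorted r_total (iota 1 M)));
        rewrite ?inE ?size_sort ?size_iota; apply/leP; lia. }
    have Hne : y (nth 0 s (k - 1)) <> y (nth 0 s (k' - 1)).
    { have /andP[/leP ? /leP ?] := s_range (k - 1) ltac:(apply/ltP; lia).
      have /andP[/leP ? /leP ?] := s_range (k' - 1) ltac:(apply/ltP; lia).
      apply: y_inj; try lia. move=> /eqP; rewrite nth_uniq ?sort_uniq ?iota_uniq ?s_size.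
      all: by [| move=> /eqP; lia | apply/ltP; lia]. }
    move: Hle; rewrite /r; case: Rle_dec => // *; lra.
  - move=> F. rewrite sum1_big [RHS]sum1_iota -(perm_big _ s_perm) [RHS](big_nth 0) s_size.
    apply: eq_bigr => i _. by rewrite subn1.
Qed.
End Enumeration.

Section Periodization.

Variables (M : nat) (y : nat -> R) (p : nat -> nat).
Hypothesis M_pos : (1 <= M)%nat.
Hypothesis y_range : forall m, 0 <= y m < 1.
Hypothesis p_range : forall k, (1 <= k <= M)%nat -> (1 <= p k <= M)%nat.
Hypothesis y_p_incr : forall k k', (1 <= k)%nat -> (k < k')%nat -> (k' <= M)%nat -> y (p k) < y (p k').
Hypothesis p_sum : forall F : nat -> R, sum1 M (fun k => F (p k)) = sum1 M F.

(* The index [a * M + k + 1], with [0 <= k < M], carries the [a]-th translate of [y (p (k + 1))]. *)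
Definition pidx (z : Z) : nat := p (S (Z.to_nat ((z - 1) mod Z.of_nat M))).
Definition plam (z : Z) : R := y (pidx z) + IZR ((z - 1) / Z.of_nat M).

Lemma block_mod_div a k : (k < M)%nat ->
  Z.modulo (a * Z.of_nat M + Z.of_nat k + 1 - 1) (Z.of_nat M) = Z.of_nat k /\
  Z.div (a * Z.of_nat M + Z.of_nat k + 1 - 1) (Z.of_nat M) = a.
Proof.
  intros Hk. split.
  - symmetry. apply (Z.mod_unique_pos _ _ a); lia.
  - symmetry. apply (Z.div_unique_pos _ _ _ (Z.of_nat k)); lia.
Qed.

Lemma pidx_block a k : (k < M)%nat -> pidx (a * Z.of_nat M + Z.of_nat k + 1) = p (S k).
Proof. intros Hk. unfold pidx. now rewrite (proj1 (block_mod_div a k Hk)), Nat2Z.id. Qed.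

Lemma plam_block a k : (k < M)%nat ->
  plam (a * Z.of_nat M + Z.of_nat k + 1) = y (p (S k)) + IZR a.
Proof. intros Hk. unfold plam. now rewrite pidx_block, (proj2 (block_mod_div a k Hk)). Qed.

Lemma block_of_nat a k : Z.of_nat (S (a * M + k)) = (Z.of_nat a * Z.of_nat M + Z.of_nat k + 1)%Z.
Proof. lia. Qed.

Lemma pidx_range z : (1 <= pidx z <= M)%nat.
Proof. apply p_range. pose proof (Z.mod_pos_bound (z - 1) (Z.of_nat M) ltac:(lia)). lia. Qed.

Lemma plam_incr z : plam z < plam (z + 1)%Z.
Proof.
  pose proof (Z.mod_pos_bound (z - 1) (Z.of_nat M) ltac:(lia)).
  pose proof (Z.div_mod (z - 1) (Z.of_nat M) ltac:(lia)).
  set (a := ((z - 1) / Z.of_nat M)%Z) in *. set (k := Z.to_nat ((z - 1) mod Z.of_nat M)).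
  replace z with (a * Z.of_nat M + Z.of_nat k + 1)%Z by lia.
  rewrite plam_block by lia.
  destruct (Nat.lt_ge_cases (S k) M) as [Hk|Hk].
  - replace (a * Z.of_nat M + Z.of_nat k + 1 + 1)%Z
      with (a * Z.of_nat M + Z.of_nat (S k) + 1)%Z by lia.
    rewrite plam_block by exact Hk.
    pose proof (y_p_incr (S k) (S (S k)) ltac:(lia) ltac:(lia) ltac:(lia)). lra.
  - replace (a * Z.of_nat M + Z.of_nat k + 1 + 1)%Z
      with ((a + 1) * Z.of_nat M + Z.of_nat 0 + 1)%Z by lia.
    rewrite plam_block, plus_IZR by lia.
    pose proof (y_range (p (S k))). pose proof (y_range (p 1%nat)). lra.
Qed.

Lemma plam_sub z z' : exists k : Z, plam z' - plam z = y (pidx z') - y (pidx z) + IZR k.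
Proof.
  exists ((z' - 1) / Z.of_nat M - (z - 1) / Z.of_nat M)%Z. unfold plam. rewrite minus_IZR. ring.
Qed.

Lemma periodic_sum K f : sum1 (K * M) (fun i => f (pidx (Z.of_nat i))) = INR K * sum1 M f.
Proof.
  rewrite sum1_sum0, sum0_blocks, <- sum0_const. apply sum0_ext. intros a _.
  rewrite <- p_sum, sum1_sum0. apply sum0_ext. intros k Hk.
  now rewrite block_of_nat, pidx_block.
Qed.

Lemma periodic_double_sum K (g : nat -> nat -> R -> R) :
  sum1 (K * M) (fun i => sum1 (K * M) (fun i' =>
    g (pidx (Z.of_nat i)) (pidx (Z.of_nat i')) (plam (Z.of_nat i) - plam (Z.of_nat i'))))
  = sum1 M (fun m => sum1 M (fun n =>
      sum0 K (fun a => sum0 K (fun b => g m n (y m - y n + IZR (Z.of_nat a - Z.of_nat b)))))).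
Proof.
  assert (Hp : forall F, sum0 M (fun k => F (p (S k))) = sum1 M F)
    by (intros F; rewrite <- p_sum, sum1_sum0; reflexivity).
  rewrite sum1_double_blocks, <- Hp. apply sum0_ext. intros k Hk.
  rewrite <- Hp. apply sum0_ext. intros l Hl.
  apply sum0_ext. intros a _. apply sum0_ext. intros b _.
  rewrite !block_of_nat, !pidx_block, !plam_block by assumption.
  f_equal. rewrite minus_IZR. ring.
Qed.

Variables (d tau : nat -> R).
Hypothesis d_nonneg : forall m, 0 <= d m.
Hypothesis tau_nonneg : forall m, (1 <= m <= M)%nat -> 0 <= tau m.
Hypothesis d_le_delta : forall z, d (pidx z) <= delta plam z.

Lemma lhs_i_periodic_ge K :
  sum1 M (fun m => sum1 M (fun n =>
    sum0 K (fun a => sum0 K (fun b =>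
      pair_weight d tau m n / (y m - y n + IZR (Z.of_nat a - Z.of_nat b)) ^ 2))))
  <= lhs_i (K * M) plam (fun i => tau (pidx (Z.of_nat i))).
Proof.
  rewrite <- (periodic_double_sum K (fun m n r => pair_weight d tau m n / r ^ 2)).
  unfold lhs_i. apply sum1_le. intros i _. apply sum1_le. intros i' _.
  destruct (Nat.eqb_spec i' i) as [->|].
  - (* the diagonal vanishes on the left too, since [r / 0 = 0] *)
    rewrite Rminus_diag, pow_i, Rdiv_0_r by lia. lra.
  - apply div_sq_le_compat.
    change (pair_weight d tau (pidx (Z.of_nat i)) (pidx (Z.of_nat i')))
      with (pair_weight (fun j => d (pidx (Z.of_nat j))) (fun j => tau (pidx (Z.of_nat j))) i i').
    apply pair_weight_le; try apply tau_nonneg, pidx_range; split; auto.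
Qed.

Lemma lhs_i_periodic_bound K q :
  INR (K - 2 ^ S q) *
    (sum1 M (fun m => sum1 M (fun n => pair_weight d tau m n * pi_csc2 (y m - y n)))
     - 3 * PI ^ 2 / 2 ^ q * sum1 M (fun m => sum1 M (fun n => pair_weight d tau m n)))
  <= lhs_i (K * M) plam (fun i => tau (pidx (Z.of_nat i))).
Proof.
  eapply Rle_trans; [| apply lhs_i_periodic_ge].
  rewrite <- sum1_lin. apply sum1_le. intros m Hm.
  rewrite <- sum1_lin. apply sum1_le. intros n Hn.
  replace (pair_weight d tau m n * pi_csc2 (y m - y n) - 3 * PI ^ 2 / 2 ^ q * pair_weight d tau m n)
    with (pair_weight d tau m n * (pi_csc2 (y m - y n) - 3 * PI ^ 2 / 2 ^ q)) by ring.
  apply block_sum_ge.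
  - pose proof (y_range m). pose proof (y_range n). lra.
  - apply pair_weight_nonneg; auto.
Qed.

End Periodization.

Lemma le_of_forall_INR_mul_le X Y J :
  0 <= Y -> (forall K, (1 <= K)%nat -> INR (K - J) * X <= INR K * Y) -> X <= Y.
Proof.
  intros HY H. destruct (Rle_dec X Y) as [|HXY]; [assumption|]. exfalso.
  destruct (INR_unbounded (INR J * Y / (X - Y))) as [m Hm].
  specialize (H (J + m + 1)%nat ltac:(lia)).
  replace (J + m + 1 - J)%nat with (m + 1)%nat in H by lia. rewrite !plus_INR in H. simpl INR in H.
  assert (INR m * (X - Y) > INR J * Y).
  { apply (Rmult_gt_compat_r (X - Y)) in Hm; [|lra].
    replace (INR J * Y / (X - Y) * (X - Y)) with (INR J * Y) in Hm by (field; lra). lra. }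
  nra.
Qed.

Lemma le_of_forall_sub_pow2_le X Y c : 0 <= c -> (forall q, X - c / 2 ^ q <= Y) -> X <= Y.
Proof.
  intros Hc H. destruct (Rle_dec X Y) as [|HXY]; [assumption|]. exfalso.
  destruct (INR_unbounded (c / (X - Y))) as [q Hq]. specialize (H q).
  assert (Hq2 : INR q < 2 ^ q).
  { clear. induction q as [|q IH]; [simpl; lra|]. rewrite S_INR. simpl.
    assert (1 <= 2 ^ q) by (apply pow_R1_Rle; lra). lra. }
  assert (0 < 2 ^ q) by (apply pow_lt; lra).
  assert (c / 2 ^ q < X - Y).
  { apply (Rmult_lt_reg_r (2 ^ q)); [assumption|]. replace (c / 2 ^ q * 2 ^ q) with c by (field; lra).
    apply (Rmult_gt_compat_r (X - Y)) in Hq; [|lra].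
    replace (c / (X - Y) * (X - Y)) with c in Hq by (field; lra). nra. }
  lra.
Qed.

Lemma sub_frac_part x1 x2 :
  x1 - x2 = frac_part x1 - frac_part x2 + IZR (Int_part x1 - Int_part x2).
Proof. unfold frac_part. rewrite minus_IZR. ring. Qed.

Section FractionalParts.

Variables (M : nat) (x : nat -> R).
Hypothesis x_distinct : forall m n, (1 <= m <= M)%nat -> (1 <= n <= M)%nat -> m <> n ->
  ~ (exists k : Z, x m - x n = IZR k).

Let y (m : nat) : R := frac_part (x m).

Lemma frac_part_distinct m n : (1 <= m <= M)%nat -> (1 <= n <= M)%nat -> m <> n -> y m <> y n.
Proof.
  intros Hm Hn Hmn E. apply (x_distinct m n Hm Hn Hmn).
  exists (Int_part (x m) - Int_part (x n))%Z. rewrite sub_frac_part. fold (y m) (y n). lra.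
Qed.

Lemma pi_csc2_frac_part tau :
  sum1 M (fun m => sum1 M (fun n => pair_weight (dmin M x) tau m n * pi_csc2 (y m - y n)))
  = PI ^ 2 * (1 / 3 * sum1 M (fun m => dmin M x m ^ 2 * tau m ^ 2) + lhs_ii_offdiag M x tau).
Proof.
  unfold lhs_ii_offdiag. rewrite <- sum1_scal, <- sum1_plus, <- sum1_scal. apply sum1_ext. intros m Hm.
  rewrite (sum1_ext M _ (fun n =>
             if Nat.eqb n m then PI ^ 2 / 3 * pair_weight (dmin M x) tau m m
             else PI ^ 2 * (pair_weight (dmin M x) tau m n / sin (PI * (x m - x n)) ^ 2))).
  - rewrite sum1_diag, pair_weight_diag by (apply dmin_nonneg || exact Hm).
    rewrite (sum1_ext M (fun n => if Nat.eqb n m then 0 else PI ^ 2 * _)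
                        (fun n => PI ^ 2 * (if Nat.eqb n m then 0 else
                            pair_weight (dmin M x) tau m n / sin (PI * (x m - x n)) ^ 2)))
      by (intros n _; destruct (Nat.eqb n m); ring).
    rewrite sum1_scal. field.
  - intros n Hn. unfold pi_csc2. destruct (Nat.eqb_spec n m) as [->|Hnm].
    + rewrite Rminus_diag. destruct (Req_EM_T 0 0); [field | contradiction].
    + destruct (Req_EM_T (y m - y n) 0) as [E|_].
      { exfalso. apply (frac_part_distinct m n Hm Hn (not_eq_sym Hnm)). lra. }
      replace (PI * (x m - x n)) with (PI * (y m - y n) + IZR (Int_part (x m) - Int_part (x n)) * PI)
        by (rewrite (sub_frac_part (x m)); fold (y m) (y n); ring).
      rewrite sin_sq_shift. unfold Rdiv. ring.
Qed.

Lemma frac_part_range m : 0 <= y m < 1.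
Proof. unfold y. pose proof (base_fp (x m)). lra. Qed.

Variable p : nat -> nat.
Hypothesis M_pos : (1 <= M)%nat.
Hypothesis p_range : forall k, (1 <= k <= M)%nat -> (1 <= p k <= M)%nat.
Hypothesis y_p_incr : forall k k', (1 <= k)%nat -> (k < k')%nat -> (k' <= M)%nat -> y (p k) < y (p k').

Lemma dmin_le_plam_gap z :
  dmin M x (pidx M p z) <= plam M y p (z + 1)%Z - plam M y p z /\
  dmin M x (pidx M p (z + 1)) <= plam M y p (z + 1)%Z - plam M y p z.
Proof.
  set (m := pidx M p z). set (n := pidx M p (z + 1)).
  pose proof (plam_incr M y p M_pos frac_part_range y_p_incr z) as Hincr.
  destruct (plam_sub M y p z (z + 1)) as [k Hk]. fold m n in Hk.
  set (j := (k - Int_part (x n) + Int_part (x m))%Z).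
  assert (E : plam M y p (z + 1)%Z - plam M y p z = x n - x m + IZR j).
  { rewrite Hk. unfold j, y, frac_part. rewrite plus_IZR, minus_IZR. ring. }
  assert (Hpos : 0 < x n - x m + IZR j) by lra.
  rewrite E.
  split.
  - rewrite <- (Rabs_right (x n - x m + IZR j)) by lra.
    apply dmin_le_abs_shift; [apply pidx_range; assumption | lra].
  - replace (x n - x m + IZR j) with (Rabs (x m - x n + IZR (- j)))
      by (rewrite Ropp_Ropp_IZR, Rabs_left1; lra).
    apply dmin_le_abs_shift; [apply pidx_range; assumption | rewrite Ropp_Ropp_IZR; lra].
Qed.

Lemma dmin_le_delta_plam z : dmin M x (pidx M p z) <= delta (plam M y p) z.
Proof.
  unfold delta. apply Rmin_glb; [| apply dmin_le_plam_gap].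
  pose proof (proj2 (dmin_le_plam_gap (z - 1))) as G. replace (z - 1 + 1)%Z with z in G by lia. exact G.
Qed.

End FractionalParts.

Lemma cond_i_cond_ii C3 : 0 < C3 -> cond_i C3 -> cond_ii C3.
Proof.
  intros HC3 H M x tau HM Hx Htau. pose proof PI_RGT_0.
  set (y := fun m => frac_part (x m)).
  destruct (Enumeration.sorted_enumeration M y (frac_part_distinct M x Hx))
    as [p [Hp_range [Hp_incr Hp_sum]]].
  set (L := 1 / 3 * sum1 M (fun m => dmin M x m ^ 2 * tau m ^ 2) + lhs_ii_offdiag M x tau).
  set (W := sum1 M (fun m => sum1 M (fun n => pair_weight (dmin M x) tau m n))).
  set (T := sum1 M (fun m => tau m ^ 2)).
  assert (HW : 0 <= W).
  { apply sum1_nonneg; intros; apply sum1_nonneg; intros.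
    apply pair_weight_nonneg; auto; apply dmin_nonneg. }
  assert (HT : 0 <= T) by (apply sum1_nonneg; intros; apply pow2_ge_0).
  assert (Hq : forall q, PI ^ 2 * L - 3 * PI ^ 2 * W / 2 ^ q <= C3 * T).
  { intros q. apply (le_of_forall_INR_mul_le _ _ (2 ^ S q)); [apply Rmult_le_pos; lra|].
    intros K HK. unfold L. rewrite <- (pi_csc2_frac_part M x Hx).
    replace (3 * PI ^ 2 * W / 2 ^ q) with (3 * PI ^ 2 / 2 ^ q * W) by (field; apply pow_nonzero; lra).
    eapply Rle_trans.
    - apply (lhs_i_periodic_bound M y p HM (frac_part_range x) Hp_range Hp_sum).
      + intros. apply dmin_nonneg.
      + exact Htau.
      + apply dmin_le_delta_plam; assumption.
    - rewrite <- Rmult_assoc, (Rmult_comm (INR K)), Rmult_assoc.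
      unfold T. rewrite <- (periodic_sum M p HM Hp_sum K (fun m => tau m ^ 2)).
      apply H.
      + nia.
      + apply plam_incr; [assumption | apply frac_part_range | assumption].
      + intros. apply Htau, pidx_range; assumption. }
  apply le_of_forall_sub_pow2_le in Hq; [|nra].
  replace (C3 / PI ^ 2 * T) with (C3 * T / PI ^ 2) by (field; lra).
  apply Rmult_le_reg_l with (PI ^ 2); [nra|]. field_simplify; lra.
Qed.

Theorem lemma7 (C3 : R) (hC3 : 0 < C3) :
  (forall (N : nat) (lam : Z -> R) (t : nat -> R),
      (1 <= N)%nat ->
      (forall k : Z, lam k < lam (k + 1)%Z) ->
      (forall n : nat, (1 <= n <= N)%nat -> 0 <= t n) ->
      sum1 N (fun m => sum1 N (fun n =>
        if Nat.eqb n m then 0 else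
          (delta lam (Z.of_nat m) * sqrt (delta lam (Z.of_nat m))) *
          sqrt (delta lam (Z.of_nat n)) * t m * t n /
          (lam (Z.of_nat m) - lam (Z.of_nat n)) ^ 2))
      <= C3 * sum1 N (fun n => t n ^ 2))
  <->
  (forall (M : nat) (x : nat -> R) (tau : nat -> R),
      (1 <= M)%nat ->
      (forall m n : nat, (1 <= m <= M)%nat -> (1 <= n <= M)%nat -> m <> n ->
         ~ (exists k : Z, x m - x n = IZR k)) ->
      (forall m : nat, (1 <= m <= M)%nat -> 0 <= tau m) ->
      1 / 3 * sum1 M (fun m => dmin M x m ^ 2 * tau m ^ 2)
      + sum1 M (fun m => sum1 M (fun n =>
          if Nat.eqb n m then 0 else
            (dmin M x m * sqrt (dmin M x m)) * sqrt (dmin M x n) *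
            tau m * tau n / (sin (PI * (x m - x n))) ^ 2))
      <= C3 / PI ^ 2 * sum1 M (fun m => tau m ^ 2)).
Proof. split; [exact (cond_i_cond_ii C3 hC3) | exact (cond_ii_cond_i C3)]. Qed.
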